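(* Let $(D,v^* )$ be an instance of TFP that is special with respect to $a^*\in N_{\mathrm{out}}(v^* )$ and $b^*\in N_{\mathrm{in}}(v^* )$, and let $m=|N_{\mathrm{in}}(v^* )|=2^p$ (so $|V(D)|=4m=2^{p+2}$ and the knockout tournament has $p+2$ rounds). Write $A=N_{\mathrm{out}}(v^* )$ and $B=N_{\mathrm{in}}(v^* )$. Suppose $(D,v^* )$ is a yes-instance, let $\sigma$ be an arbitrary winning seeding for $v^*$, and let $\{M_1,\dots,M_{p+2}\}$ be its match set sequence. Then: (1) $V(M_{p+1})\cap B=\{b^*\}$; (2) $|V(M_{p+1})\cap A|=2$ and $a^*\in V(M_{p+1})$; (3) for every round $r\in\{1,\dots,p\}$, every match in $M_r$ is played either between two players of $A\cup\{v^*\}$ or between two players of $B$.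
   Context: A tournament is a digraph $D=(V,E)$ in which for every pair of distinct vertices $u,v$ exactly one of the arcs $(u,v),(v,u)$ is present; $(u,v)\in E$ means $u$ beats $v$. $N_{\mathrm{out}}(v)=\{u:(v,u)\in E\}$, $N_{\mathrm{in}}(v)=\{u:(u,v)\in E\}$. A knockout tournament on $n=2^c$ players is a complete binary tree with $n$ leaves; a seeding is a bijection from players to leaves; in each of the $\log_2 n$ rounds the winners of sibling subtrees play each other and the winner (according to $D$) advances; the last remaining player is the champion. A seeding is winning for $v^*$ if $v^*$ is the champion. The Tournament Fixing Problem (TFP): given a tournament $D$ with $|V(D)|$ a power of two and $v^*\in V(D)$, decide whether a winning seeding for $v^*$ exists; $(D,v^* )$ is a yes-instance if so. For a seeding, the match set $M_r\subseteq E(D)$ of round $r$ is the set of arcs $(u,v)$ such that $u$ beat $v$ in round $r$, and $V(M_r)$ is the set of players participating in round $r$; $\{M_1,\dots,M_{\log n}\}$ is the match set sequence. An instance $(D,v^* )$ is special with respect to $a^*\in N_{\mathrm{out}}(v^* )$ and $b^*\in N_{\mathrm{in}}(v^* )$ if: (i) $|N_{\mathrm{out}}(v^* )|=3|N_{\mathrm{in}}(v^* )|-1$ and $|N_{\mathrm{in}}(v^* )|=2^p$ for some integer $p\ge 0$; (ii) $(a^*,b^* )\in E(D)$; (iii) for every $a\in N_{\mathrm{out}}(v^* )$ and $b\in N_{\mathrm{in}}(v^* )$ with $(a,b)\neq(a^*,b^* )$, we have $(b,a)\in E(D)$. *)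

From mathcomp Require Import all_boot.
Set Implicit Arguments. Unset Strict Implicit. Unset Printing Implicit Defensive.

(* Tournaments on a finite vertex type V; D u v means "u beats v". *)
Definition tournament (V : finType) (D : rel V) : Prop :=
  (forall v, ~~ D v v) /\ (forall u v, u != v -> D u v != D v u).

Definition N_out (V : finType) (D : rel V) (v : V) : {set V} := [set u | D v u].
Definition N_in  (V : finType) (D : rel V) (v : V) : {set V} := [set u | D u v].

(* A seeding is represented by the list of players placed on the leaves
   0, 1, ..., n-1 of the complete binary tree (from left to right); it is a
   bijection iff it is a permutation of the player set.  Sibling leaves /
   subtrees at every level are consecutive pairs. *)
Definition seeding (V : finType) (s : seq V) : Prop := perm_eq s (enum V).

Fixpoint play_round (V : finType) (D : rel V) (s : seq V) : seq V :=
  match s with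
  | x :: y :: t => (if D x y then x else y) :: play_round D t
  | _ => s
  end.

Fixpoint round_arcs (V : finType) (D : rel V) (s : seq V) : seq (V * V) :=
  match s with
  | x :: y :: t => (if D x y then (x, y) else (y, x)) :: round_arcs D t
  | _ => [::]
  end.

Definition match_set (V : finType) (D : rel V) (s : seq V) (r : nat) : {set V * V} :=
  [set e | e \in round_arcs D (iter r.-1 (play_round D) s)].

Definition participants (V : finType) (M : {set V * V}) : {set V} :=
  [set x | [exists e in M, (e.1 == x) || (e.2 == x)]].

Definition winning_seeding (V : finType) (D : rel V) (v : V) (s : seq V) : Prop :=
  seeding s /\ exists c, #|V| = 2 ^ c /\ iter c (play_round D) s = [:: v].

Definition yes_instance (V : finType) (D : rel V) (v : V) : Prop :=
  exists s, winning_seeding D v s.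

Definition special (V : finType) (D : rel V) (v a b : V) : Prop :=
  [/\ a \in N_out D v, b \in N_in D v,
      #|N_out D v| = 3 * #|N_in D v| - 1 /\ (exists p, #|N_in D v| = 2 ^ p),
      D a b &
      forall a' b', a' \in N_out D v -> b' \in N_in D v -> (a', b') != (a, b) -> D b' a'].

From mathcomp Require Import all_boot zify.
Set Implicit Arguments. Unset Strict Implicit. Unset Printing Implicit Defensive.

(* Let B be the set of players beating vs. Every player of B beats every player
   outside B except that a beats b. Hence a bracket whose champion lies outside B
   either avoids B or contains both a and b; if moreover the champion is not a, fewer
   than half of its players are in B, since b is the only player of B that can be
   eliminated from outside B. So the half of the draw won by vs avoids B, and the
   other half, which contains all 2^p players of B, must be decided by a beating b:
   the quarter of a avoids B and the quarter of b is exactly B. As the first p rounds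
   are played inside quarters, all claims follow. *)

Lemma count_lt_size (T : eqType) (P : pred T) (s : seq T) x :
  x \in s -> ~~ P x -> count P s < size s.
Proof.
move=> xs Px; rewrite -(count_predC P s) -addn1 leq_add2l -has_count.
by apply/hasP; exists x.
Qed.

Lemma uniq_cat_notin (T : eqType) (s1 s2 : seq T) x :
  uniq (s1 ++ s2) -> x \in s1 -> x \notin s2.
Proof. by rewrite cat_uniq => /and3P[_ /hasPn dis _] xs1; apply: contraL xs1 => /dis. Qed.

Lemma uniq_cat_notinr (T : eqType) (s1 s2 : seq T) x :
  uniq (s1 ++ s2) -> x \in s2 -> x \notin s1.
Proof. by rewrite uniq_catC; apply: uniq_cat_notin. Qed.

Lemma count_mem_perm_enum (V : finType) (A : {pred V}) (s : seq V) :
  perm_eq s (enum V) -> count (mem A) s = #|A|.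
Proof.
move=> e; have Us : uniq s by rewrite (perm_uniq e) enum_uniq.
rewrite -size_filter -(card_uniqP (filter_uniq _ Us)); apply: eq_card => x.
by rewrite mem_filter (perm_mem e) mem_enum andbT.
Qed.

Lemma seq2_ind (T : Type) (P : seq T -> Prop) :
  P [::] -> (forall x, P [:: x]) -> (forall x y s, P s -> P [:: x, y & s]) ->
  forall s, P s.
Proof.
move=> P0 P1 P2 s; suff [] : P s /\ forall x, P (x :: s) by [].
elim: s => [|y s [Ps Pys]]; first by split=> // x; apply: P1.
by split=> [|x]; [apply: Pys | apply: P2].
Qed.

Section Rounds.
Variables (V : finType) (D : rel V).

Definition win (x y : V) : V := if D x y then x else y.

Lemma win_eq x y : win x y = x \/ win x y = y.
Proof. by rewrite /win; case: ifP; [left | right]. Qed.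

Definition lose (x y : V) : V := if D x y then y else x.

Lemma win_sym x y : tournament D -> x != y -> win x y = win y x.
Proof.
by move=> [_ antisym] /antisym; rewrite /win; case: (D x y); case: (D y x).
Qed.

Lemma mem_win_lose x y : [:: x; y] =i [:: win x y; lose x y].
Proof. by move=> z; rewrite /win /lose !inE; case: (D x y); rewrite // orbC. Qed.

Lemma lose_neq_win x y : x != y -> lose x y != win x y.
Proof. by rewrite /win /lose; case: (D x y); rewrite // eq_sym. Qed.

Lemma play_round_cat s1 s2 : ~~ odd (size s1) ->
  play_round D (s1 ++ s2) = play_round D s1 ++ play_round D s2.
Proof. by elim/seq2_ind: s1 => [|x|x y t IH] //=; rewrite negbK => /IH ->. Qed.

Lemma round_arcs_cat s1 s2 : ~~ odd (size s1) ->
  round_arcs D (s1 ++ s2) = round_arcs D s1 ++ round_arcs D s2.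
Proof. by elim/seq2_ind: s1 => [|x|x y t IH] //=; rewrite negbK => /IH ->. Qed.

Lemma size_play_round s : size (play_round D s) = uphalf (size s).
Proof. by elim/seq2_ind: s => [|x|x y t /= ->]. Qed.

Lemma mem_play_round s x : x \in play_round D s -> x \in s.
Proof.
elim/seq2_ind: s => [|x0|x0 y t IH] //=; rewrite !inE => /orP[/eqP->|/IH->].
  by case: (D x0 y); rewrite eqxx ?orbT.
by rewrite !orbT.
Qed.

Lemma mem_iter_play_round j s x : x \in iter j (play_round D) s -> x \in s.
Proof. by elim: j x => //= j IH x /mem_play_round /IH. Qed.

Lemma mem_round_arcs s e : e \in round_arcs D s -> (e.1 \in s) && (e.2 \in s).
Proof.
elim/seq2_ind: s => [|x|x y t IH] //=; rewrite !inE => /orP[/eqP->|/IH/andP[-> ->]].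
  by case: (D x y); rewrite /= !eqxx ?orbT.
by rewrite !orbT.
Qed.

Lemma size_iter_play_round k j s : size s = 2 ^ k -> j <= k ->
  size (iter j (play_round D) s) = 2 ^ (k - j).
Proof.
move=> Ss; elim: j => [|j IH] le_jk; first by rewrite subn0.
rewrite iterS size_play_round IH 1?ltnW // -(subnSK le_jk) expnS mul2n.
exact: uphalf_double.
Qed.

Lemma iter_play_round_cat k j s1 s2 : size s1 = 2 ^ k -> j <= k ->
  iter j (play_round D) (s1 ++ s2) =
  iter j (play_round D) s1 ++ iter j (play_round D) s2.
Proof.
move=> S1; elim: j => [|j IH] // le_jk.
rewrite !iterS IH 1?ltnW // play_round_cat // (size_iter_play_round S1) 1?ltnW //.
by rewrite -(subnSK le_jk) expnS mul2n odd_double.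
Qed.

Lemma round_arcs_iter_cat k j s1 s2 : size s1 = 2 ^ k -> j < k ->
  round_arcs D (iter j (play_round D) (s1 ++ s2)) =
  round_arcs D (iter j (play_round D) s1) ++ round_arcs D (iter j (play_round D) s2).
Proof.
move=> S1 lt_jk; rewrite (iter_play_round_cat _ S1) 1?ltnW //.
rewrite round_arcs_cat // (size_iter_play_round S1) 1?ltnW //.
by rewrite -(subnSK lt_jk) expnS mul2n odd_double.
Qed.

Definition wins_bracket (k : nat) (t : seq V) (w : V) : Prop :=
  size t = 2 ^ k /\ iter k (play_round D) t = [:: w].

Lemma wins_bracket_mem k t w : wins_bracket k t w -> w \in t.
Proof. by case=> _ itw; apply: (@mem_iter_play_round k); rewrite itw inE. Qed.

Lemma wins_bracket_cat k t1 t2 w1 w2 :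
  wins_bracket k t1 w1 -> wins_bracket k t2 w2 -> wins_bracket k.+1 (t1 ++ t2) (win w1 w2).
Proof.
move=> [S1 I1] [S2 I2]; split; first by rewrite size_cat S1 S2 expnS mul2n addnn.
by rewrite iterS (iter_play_round_cat _ S1) // I1 I2.
Qed.

Lemma wins_bracketS k t w : wins_bracket k.+1 t w ->
  exists t1 t2 w1 w2,
    [/\ t = t1 ++ t2, wins_bracket k t1 w1, wins_bracket k t2 w2 & w = win w1 w2].
Proof.
move=> [St It].
have le_t : 2 ^ k <= size t by rewrite St leq_pexp2l.
have S1 : size (take (2 ^ k) t) = 2 ^ k by rewrite size_take_min; apply/minn_idPl.
have S2 : size (drop (2 ^ k) t) = 2 ^ k by rewrite size_drop St expnS; lia.
move: It; rewrite -(cat_take_drop (2 ^ k) t) iterS (iter_play_round_cat _ S1) //.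
have := size_iter_play_round S1 (leqnn k); have := size_iter_play_round S2 (leqnn k).
rewrite subnn expn0.
case I1: (iter k _ (take _ t)) => [|w1 []] //; case I2: (iter k _ (drop _ t)) => [|w2 []] //.
by move=> _ _ [<-]; exists (take (2 ^ k) t), (drop (2 ^ k) t), w1, w2.
Qed.

Lemma mem_participants_round s : ~~ odd (size s) ->
  participants [set e | e \in round_arcs D s] =i s.
Proof.
move=> even x; rewrite inE.
have -> : [exists e in [set e | e \in round_arcs D s], (e.1 == x) || (e.2 == x)] =
          has (fun e => (e.1 == x) || (e.2 == x)) (round_arcs D s).
  apply/existsP/hasP => [[e /andP[ein P]]|[e ein P]]; exists e => //.
    by rewrite inE in ein.
  by rewrite inE ein.
elim/seq2_ind: s even => [|x0|x0 y t IH] //=; rewrite negbK => /IH ->.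
by case: (D x0 y); rewrite /= !inE (eq_sym x0) (eq_sym y) ?orbA // (orbC (x == y)).
Qed.

Lemma mem_round_arcs_iter_flatten k j (qs : seq (seq V)) e :
  all (fun q => size q == 2 ^ k) qs -> j < k ->
  e \in round_arcs D (iter j (play_round D) (flatten qs)) ->
  exists2 q, q \in qs & (e.1 \in q) && (e.2 \in q).
Proof.
move=> + lt_jk; elim: qs => [|q qs IH] /=.
  by move=> _; suff -> : iter j (play_round D) [::] = [::] by []; elim: j {lt_jk} => //= j ->.
case/andP=> /eqP Sq Sqs; rewrite (round_arcs_iter_cat _ Sq lt_jk) mem_cat.
case/orP=> [/mem_round_arcs/andP[/mem_iter_play_round e1 /mem_iter_play_round e2]|].
  by exists q; rewrite ?mem_head ?e1.
by case/(IH Sqs) => q' qq' eq'; exists q' => //; rewrite inE qq' orbT.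
Qed.

Lemma wins_bracket_quarters k s w : wins_bracket k.+2 s w ->
  exists q1 q2 q3 q4 w1 w2 w3 w4,
    [/\ s = q1 ++ q2 ++ q3 ++ q4,
        [/\ wins_bracket k q1 w1, wins_bracket k q2 w2, wins_bracket k q3 w3
          & wins_bracket k q4 w4],
        iter k (play_round D) s = [:: w1; w2; w3; w4]
      & w = win (win w1 w2) (win w3 w4)].
Proof.
case/wins_bracketS=> h1 [h2 [v1 [v2 [-> /wins_bracketS H1 /wins_bracketS H2 ->]]]].
case: H1 H2 => [q1 [q2 [w1 [w2 [-> H1 H2 ->]]]]] [q3 [q4 [w3 [w4 [-> H3 H4 ->]]]]].
exists q1, q2, q3, q4, w1, w2, w3, w4; split; rewrite -?catA //.
case: H1 H2 H3 H4 => [S1 I1] [S2 I2] [S3 I3] [_ I4].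
rewrite (iter_play_round_cat _ S1) // (iter_play_round_cat _ S2) //.
by rewrite (iter_play_round_cat _ S3) // I1 I2 I3 I4.
Qed.

End Rounds.

Definition dominates_except (V : finType) (D : rel V) (B : {set V}) (a b : V) : Prop :=
  [/\ tournament D, a \notin B, b \in B &
      forall x y, x \notin B -> y \in B -> (x, y) != (a, b) -> D y x].

Section Domination.
Variables (V : finType) (D : rel V) (B : {set V}) (a b : V).
Hypothesis B_dom : dominates_except D B a b.

Let tD : tournament D. Proof. by case: B_dom. Qed.
Let a_notin_B : a \notin B. Proof. by case: B_dom. Qed.
Let b_in_B : b \in B. Proof. by case: B_dom. Qed.
Let B_beats x y : x \notin B -> y \in B -> (x, y) != (a, b) -> D y x.
Proof. by case: B_dom => _ _ _; apply. Qed.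

Lemma win_dominant x y : x \in B \/ y \in B -> (x, y) != (a, b) -> (y, x) != (a, b) ->
  win D x y \in B.
Proof.
move=> xy_in xy yx.
case: (boolP (x \in B)) => xB; case: (boolP (y \in B)) => yB.
- by case: (win_eq D x y) => ->.
- by rewrite /win B_beats.
- have Dyx := B_beats xB yB xy.
  have nxy : x != y by apply: contraNneq xB => ->.
  by case: tD => _ /(_ _ _ nxy); rewrite /win Dyx; case: (D x y).
- by move: xy_in; rewrite (negbTE xB) (negbTE yB); case.
Qed.

Lemma upset_of_win_notin x y : win D x y \notin B -> x \in B \/ y \in B ->
  (x, y) = (a, b) \/ (y, x) = (a, b).
Proof.
move=> nB xy; case: (eqVneq (x, y) (a, b)) => [|ne1]; first by left.
case: (eqVneq (y, x) (a, b)) => [|ne2]; first by right.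
by rewrite win_dominant in nB.
Qed.

Lemma win_notin_players x y : win D x y \notin B -> win D x y != a -> x \notin B /\ y \notin B.
Proof.
move=> nB na; apply/andP; rewrite -negb_or; apply/negP => /orP xy.
by case: (upset_of_win_notin nB xy) => -[Ex Ey]; subst x y;
  [case: (win_eq D a b) | case: (win_eq D b a)] => E; rewrite E ?eqxx ?b_in_B in nB na.
Qed.

Lemma champion_notin_upset k t w :
  wins_bracket D k t w -> w \notin B -> has (mem B) t -> (a \in t) && (b \in t).
Proof.
elim: k t w => [|k IH] t w.
  by case=> _ /= -> wB; rewrite /= orbF (negbTE wB).
case/wins_bracketS=> t1 [t2 [w1 [w2 [-> H1 H2 ->]]]] nB hB.
apply/negPn/negP => nab; apply/negP: nB.
have pair_ne x y : x \in t1 ++ t2 -> y \in t1 ++ t2 -> (x, y) != (a, b).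
  by move=> xt yt; apply: contra nab => /eqP[<- <-]; rewrite xt yt.
have half_in t' w' : wins_bracket D k t' w' -> {subset t' <= t1 ++ t2} ->
    has (mem B) t' -> w' \in B.
  move=> H sub h; apply/negPn/negP => nw.
  have /andP[/sub a_t /sub b_t] := IH _ _ H nw h; by rewrite a_t b_t in nab.
have w1t : w1 \in t1 ++ t2 by rewrite mem_cat (wins_bracket_mem H1).
have w2t : w2 \in t1 ++ t2 by rewrite mem_cat (wins_bracket_mem H2) orbT.
rewrite negbK; apply: win_dominant; rewrite ?pair_ne //.
move: hB; rewrite has_cat => /orP[h|h];
  [left; apply: half_in H1 _ h | right; apply: half_in H2 _ h];
  by move=> x xt; rewrite mem_cat xt ?orbT.
Qed.

Definition thin (t : seq V) : bool :=
  (count (mem B) t == 0) || [&& a \in t, b \in t & (count (mem B) t).*2 < size t].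

Lemma thin_perm t t' : perm_eq t t' -> thin t = thin t'.
Proof. by move=> e; rewrite /thin (permP e) (perm_mem e) (perm_mem e) (perm_size e). Qed.

Lemma thin_cat t1 t2 : thin t1 -> (has (mem B) t2 -> (a \in t2) && (b \in t2)) ->
  size t1 = size t2 -> uniq (t1 ++ t2) -> thin (t1 ++ t2).
Proof.
move=> th1 cl2 S U; rewrite /thin count_cat !mem_cat size_cat.
case: (boolP (has (mem B) t2)) => h2.
  have /andP[a2 b2] := cl2 h2.
  have /eqP c1 : count (mem B) t1 == 0.
    by move: th1; rewrite /thin (negbTE (uniq_cat_notinr U a2)) orbF.
  have := count_lt_size (P := mem B) a2 a_notin_B.
  by rewrite c1 a2 b2 !orbT /= add0n => lt; apply/orP; right; lia.
have c2 : count (mem B) t2 = 0 by move: h2; rewrite has_count; lia.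
rewrite c2 addn0; case/orP: th1 => [-> //|/and3P[a1 b1 lt]].
by rewrite a1 b1 /=; apply/orP; right; lia.
Qed.

Lemma thin_champion k t w :
  wins_bracket D k t w -> w \notin B -> w != a -> uniq t -> thin t.
Proof.
elim: k t w => [|k IH] t w.
  by case=> _ /= -> wB; rewrite /thin /= (negbTE wB).
case/wins_bracketS=> t1 [t2 [w1 [w2 [-> H1 H2 ->]]]] wB wa U.
have [w1B w2B] := win_notin_players wB wa.
have [U1 U2] : uniq t1 /\ uniq t2 by move: U; rewrite cat_uniq => /and3P[-> _ ->].
have S : size t1 = size t2 by case: H1 => ->; case: H2 => ->.
move: wB wa; rewrite /win; case: ifP => _ wB wa.
  exact: thin_cat (IH _ _ H1 wB wa U1) (champion_notin_upset H2 w2B) S U.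
rewrite (thin_perm (permEl (perm_catC t1 t2))).
by apply: thin_cat (IH _ _ H2 wB wa U2) (champion_notin_upset H1 w1B) _ _; rewrite // uniq_catC.
Qed.

Lemma champion_half_avoids k h h' w w' :
  wins_bracket D k.+1 h w -> wins_bracket D k.+1 h' w' ->
  w \notin B -> w != a -> w' \notin B ->
  uniq (h ++ h') -> count (mem B) (h ++ h') = 2 ^ k -> count (mem B) h = 0.
Proof.
move=> Hh Hh' wB wa w'B U C.
have Uh : uniq h by move: U; rewrite cat_uniq => /andP[].
case/orP: (thin_champion Hh wB wa Uh) => [/eqP // | /and3P[a_h _ lt]].
have c' : count (mem B) h' = 0.
  apply/eqP; rewrite -leqn0 leqNgt -has_count; apply: contraL (uniq_cat_notin U a_h).
  by case/(champion_notin_upset Hh' w'B)/andP => ->.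
by move: C lt; rewrite count_cat c' addn0; case: Hh => -> _; rewrite expnS; lia.
Qed.

Definition unmixed (q : seq V) : bool := all (mem B) q || ~~ has (mem B) q.

Lemma upset_half k qc qd wc wd :
  wins_bracket D k qc wc -> wins_bracket D k qd wd -> win D wc wd \notin B ->
  uniq (qc ++ qd) -> count (mem B) (qc ++ qd) = 2 ^ k ->
  [:: wc; wd] =i [:: a; b] /\ unmixed qc && unmixed qd.
Proof.
move=> Hc Hd wB U C.
wlog a_qc : qc qd wc wd Hc Hd wB U C / a \in qc.
  move=> IH; have hB : has (mem B) (qc ++ qd) by rewrite has_count C expn_gt0.
  have /andP[] := champion_notin_upset (wins_bracket_cat Hc Hd) wB hB.
  rewrite mem_cat => /orP[a_qc _|a_qd _]; first exact: IH.
  have ne : wc != wd.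
    apply: contraTneq (wins_bracket_mem Hd) => <-.
    by apply: uniq_cat_notin U _; apply: wins_bracket_mem Hc.
  have [E mix] : [:: wd; wc] =i [:: a; b] /\ unmixed qd && unmixed qc.
    apply: IH => //; first by rewrite -win_sym.
      by rewrite uniq_catC.
    by rewrite count_cat addnC -count_cat.
  by split; [move=> x; rewrite -E !inE orbC | rewrite andbC].
have a_qd := uniq_cat_notin U a_qc.
have ltc : count (mem B) qc < size qc := count_lt_size a_qc a_notin_B.
have hd : has (mem B) qd.
  by rewrite has_count; move: C ltc; rewrite count_cat; case: Hc => -> _; lia.
have wdB : wd \in B.
  by apply/negPn/negP => /(champion_notin_upset Hd)/(_ hd)/andP[]; rewrite (negbTE a_qd).
have [[Ec Ed]|[Ed _]] := upset_of_win_notin wB (or_intror wdB); last first.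
  by move: a_notin_B; rewrite -Ed wdB.
subst wc wd.
have b_qc := uniq_cat_notinr U (wins_bracket_mem Hd).
have hc : ~~ has (mem B) qc by apply: contra b_qc => /(champion_notin_upset Hc a_notin_B)/andP[].
have c0 : count (mem B) qc = 0 by move: hc; rewrite has_count; lia.
split=> //; rewrite /unmixed hc orbT all_count.
by case: Hd => -> _; move: C; rewrite count_cat c0 add0n => ->; rewrite eqxx.
Qed.

Lemma unmixed_pair q x y : unmixed q -> x \in q -> y \in q ->
  (x \in ~: B) && (y \in ~: B) \/ (x \in B) && (y \in B).
Proof.
rewrite !in_setC => /orP[/allP Bq xq yq | /hasPn nBq xq yq].
  by right; apply/andP; split; apply: Bq.
by left; apply/andP; split; apply: nBq.
Qed.

End Domination.

Lemma setC_N_in (V : finType) (D : rel V) v :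
  tournament D -> ~: N_in D v = v |: N_out D v.
Proof.
move=> [irr antisym]; apply/setP => x; rewrite in_setC in_setU1 !inE.
case: (eqVneq x v) => [->|/antisym]; first by rewrite irr.
by case: (D x v); case: (D v x).
Qed.

Section Special.
Variables (V : finType) (D : rel V) (vs a b : V) (p : nat).
Hypotheses (tD : tournament D) (sp : special D vs a b) (card_in : #|N_in D vs| = 2 ^ p).

Let B := N_in D vs.

Lemma N_out_notin x : x \in N_out D vs -> x \notin B.
Proof. by move=> xA; rewrite -in_setC setC_N_in // in_setU1 xA orbT. Qed.

Lemma vs_notin : vs \notin B.
Proof. by case: tD => irr _; rewrite inE irr. Qed.

Lemma vs_neq_a : vs != a.
Proof. by case: sp => a_out _ _ _ _; apply: contraTneq a_out => <-; rewrite inE; case: tD. Qed.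

Lemma special_dominates : dominates_except D B a b.
Proof.
have [a_out b_in _ _ a_upset] := sp; split=> // [|x y]; first exact: N_out_notin.
rewrite -in_setC setC_N_in // in_setU1 => /orP[/eqP -> | xA] yB ne; first by rewrite inE in yB.
exact: a_upset.
Qed.

Lemma card_special : #|V| = 2 ^ p.+2.
Proof.
have [_ _ [card_out _] _ _] := sp.
have vs_out : vs \notin N_out D vs by rewrite inE; case: tD.
rewrite -(cardsC B) setC_N_in // cardsU1 vs_out.
rewrite card_out card_in !expnS; have := expn_gt0 2 p; lia.
Qed.

Lemma special_quarters_left (q1 q2 q3 q4 : seq V) w1 w2 w3 w4 :
  wins_bracket D p q1 w1 -> wins_bracket D p q2 w2 ->
  wins_bracket D p q3 w3 -> wins_bracket D p q4 w4 ->
  win D w1 w2 = vs -> win D w3 w4 \notin B ->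
  perm_eq (q1 ++ q2 ++ q3 ++ q4) (enum V) ->
  exists2 x0, (x0 \in N_out D vs) && (x0 != a) &
    [:: w1; w2; w3; w4] =i [:: vs; x0; a; b] /\ all (unmixed B) [:: q1; q2; q3; q4].
Proof.
move=> H1 H2 H3 H4 h12 B34 e.
have U : uniq ((q1 ++ q2) ++ q3 ++ q4) by rewrite -catA (perm_uniq e) enum_uniq.
have C : count (mem B) ((q1 ++ q2) ++ q3 ++ q4) = 2 ^ p.
  by rewrite -catA (count_mem_perm_enum _ e).
have H12 := wins_bracket_cat H1 H2; rewrite h12 in H12.
have c12 : count (mem B) (q1 ++ q2) = 0.
  apply: (champion_half_avoids special_dominates H12 (wins_bracket_cat H3 H4)) => //.
  - exact: vs_notin.
  - exact: vs_neq_a.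
have [U12 U34] : uniq (q1 ++ q2) /\ uniq (q3 ++ q4).
  by move: U; rewrite cat_uniq => /and3P[-> _ ->].
have C34 : count (mem B) (q3 ++ q4) = 2 ^ p by move: C; rewrite count_cat c12.
have [W34 mix34] := upset_half special_dominates H3 H4 B34 U34 C34.
have /hasPn free12 : ~~ has (mem B) (q1 ++ q2) by rewrite has_count c12.
have in_half q w x : wins_bracket D p q w -> x \in [:: w] -> x \in q.
  by move=> H; rewrite inE => /eqP->; apply: wins_bracket_mem H.
have a34 : a \in q3 ++ q4.
  have : a \in [:: w3] ++ [:: w4] by rewrite W34 mem_head.
  by rewrite !mem_cat => /orP[/(in_half _ _ _ H3)|/(in_half _ _ _ H4)] ->; rewrite ?orbT.
have W12 : [:: w1; w2] =i [:: vs; lose D w1 w2] by rewrite -h12; apply: mem_win_lose.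
have x0_12 : lose D w1 w2 \in q1 ++ q2.
  have : lose D w1 w2 \in [:: w1] ++ [:: w2] by rewrite W12 !inE eqxx orbT.
  by rewrite !mem_cat => /orP[/(in_half _ _ _ H1)|/(in_half _ _ _ H2)] ->; rewrite ?orbT.
have x0_vs : lose D w1 w2 != vs.
  rewrite -h12 lose_neq_win //; apply: contraTneq (wins_bracket_mem H2) => <-.
  exact: uniq_cat_notin U12 (wins_bracket_mem H1).
exists (lose D w1 w2).
  have : lose D w1 w2 \in ~: B by rewrite in_setC free12.
  rewrite setC_N_in // in_setU1 (negbTE x0_vs) /= => ->; apply: contraTneq a34 => <-.
  exact: uniq_cat_notin U x0_12.
split; last first.
  have unmixed12 q : {subset q <= q1 ++ q2} -> unmixed B q.
    by move=> sub; apply/orP; right; apply/hasPn => x /sub; apply: free12.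
  by rewrite /= andbT mix34 andbT !unmixed12 // => x xq; rewrite mem_cat xq ?orbT.
move=> x; rewrite -[[:: w1; w2; w3; w4]]/([:: w1; w2] ++ [:: w3; w4]).
by rewrite -[[:: vs; _; a; b]]/([:: vs; _] ++ [:: a; b]) !mem_cat W12 W34.
Qed.

Lemma special_quarters (q1 q2 q3 q4 : seq V) w1 w2 w3 w4 :
  wins_bracket D p q1 w1 -> wins_bracket D p q2 w2 ->
  wins_bracket D p q3 w3 -> wins_bracket D p q4 w4 ->
  vs = win D (win D w1 w2) (win D w3 w4) ->
  perm_eq (q1 ++ q2 ++ q3 ++ q4) (enum V) ->
  exists2 x0, (x0 \in N_out D vs) && (x0 != a) &
    [:: w1; w2; w3; w4] =i [:: vs; x0; a; b] /\ all (unmixed B) [:: q1; q2; q3; q4].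
Proof.
move=> H1 H2 H3 H4 Ew e.
have [B12 B34] : win D w1 w2 \notin B /\ win D w3 w4 \notin B.
  by apply: (win_notin_players special_dominates); rewrite -Ew ?vs_notin ?vs_neq_a.
have [h12|h34] : win D w1 w2 = vs \/ win D w3 w4 = vs.
  by rewrite Ew; case: (win_eq D (win D w1 w2) (win D w3 w4)) => ->; [left | right].
  exact: special_quarters_left.
have [|x0 x0_ok [W mix]] := special_quarters_left H3 H4 H1 H2 h34 B12.
  by rewrite catA perm_catC -catA.
exists x0 => //; split.
  by move=> x; rewrite -W; apply: (perm_mem (permEl (perm_catC [:: w1; w2] [:: w3; w4]))).
by rewrite (perm_all _ (permEl (perm_catC [:: q1; q2] [:: q3; q4]))).
Qed.

Lemma special_semifinal (P : {set V}) x0 :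
  x0 \in N_out D vs -> x0 != a -> P =i [:: vs; x0; a; b] ->
  [/\ P :&: N_in D vs = [set b], #|P :&: N_out D vs| = 2 & a \in P].
Proof.
move=> x0_out x0a EP; have [a_out b_in _ _ _] := sp.
have vs_out : vs \notin N_out D vs by rewrite inE; case: tD.
have b_out : b \notin N_out D vs by apply: contraL b_in; apply: N_out_notin.
split; last by rewrite EP !inE eqxx !orbT.
  apply/setP => x; rewrite in_setI EP in_set1 !in_cons in_nil.
  case: (eqVneq x b) => [->|_]; first by rewrite b_in !orbT.
  rewrite orbF; case: (eqVneq x vs) => [->|_]; first by rewrite (negbTE vs_notin).
  case: (eqVneq x x0) => [->|_]; first by rewrite (negbTE (N_out_notin x0_out)) orbT.
  by case: (eqVneq x a) => [->|_] //; rewrite (negbTE (N_out_notin a_out)) orbT.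
have -> : P :&: N_out D vs = [set x0; a]; last by rewrite cards2 x0a.
apply/setP => x; rewrite in_setI EP in_set2 !in_cons in_nil.
case: (eqVneq x x0) => [->|_]; first by rewrite x0_out !orbT.
case: (eqVneq x a) => [->|_]; first by rewrite a_out !orbT.
case: (eqVneq x vs) => [->|_]; first by rewrite (negbTE vs_out).
by case: (eqVneq x b) => [->|_] //; rewrite (negbTE b_out).
Qed.

End Special.

Theorem lemma1 (V : finType) (D : rel V) (vs a b : V) (p : nat) (s : seq V) :
  tournament D ->
  special D vs a b ->
  #|N_in D vs| = 2 ^ p ->
  yes_instance D vs ->
  winning_seeding D vs s ->
  [/\ participants (match_set D s p.+1) :&: N_in D vs = [set b],
      #|participants (match_set D s p.+1) :&: N_out D vs| = 2,
      a \in participants (match_set D s p.+1) &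
      forall r, 1 <= r <= p -> forall e, e \in match_set D s r ->
        (e.1 \in vs |: N_out D vs /\ e.2 \in vs |: N_out D vs) \/
        (e.1 \in N_in D vs /\ e.2 \in N_in D vs)].
Proof.
move=> tD sp card_in _ [perm_s [c [card_V champ]]].
have Hs : wins_bracket D p.+2 s vs.
  have -> : p.+2 = c.
    by apply/eqP; rewrite -(eqn_exp2l _ _ (ltnSn 1)) -(card_special tD sp card_in) card_V.
  by split; rewrite // (perm_size perm_s) -cardT.
have [q1 [q2 [q3 [q4 [w1 [w2 [w3 [w4 [Es [H1 H2 H3 H4] semi Ew]]]]]]]]] :=
  wins_bracket_quarters Hs.
have perm_q : perm_eq (q1 ++ q2 ++ q3 ++ q4) (enum V) by rewrite -Es.
have [x0 /andP[x0_out x0a] [W mix]] := special_quarters tD sp card_in H1 H2 H3 H4 Ew perm_q.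
have part : participants (match_set D s p.+1) =i [:: vs; x0; a; b].
  by move=> x; rewrite /match_set /= semi mem_participants_round // W.
have [? ? ?] := special_semifinal tD sp x0_out x0a part.
split=> // r /andP[r_gt0 r_le] e; rewrite inE Es => e_in.
have sizes : all (fun q => size q == 2 ^ p) [:: q1; q2; q3; q4].
  by case: H1 H2 H3 H4 => [S1 _] [S2 _] [S3 _] [S4 _]; rewrite /= S1 S2 S3 S4 eqxx.
have [q q_in /andP[e1 e2]] : exists2 q, q \in [:: q1; q2; q3; q4] & (e.1 \in q) && (e.2 \in q).
  by apply: (mem_round_arcs_iter_flatten (D := D) (j := r.-1) sizes); [lia | rewrite /= cats0].
have := unmixed_pair (allP mix q q_in) e1 e2.
by rewrite setC_N_in // => -[] /andP[]; [left | right].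
Qed.
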